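(* Let $(A,E)$ be the direct producted $W^*$-probability space over $D_N$ of $W^*$-probability spaces $(A_1,\varphi_1),\dots,(A_N,\varphi_N)$. The element $x=(a_1,\dots,a_N)\in A$ is $D_N$-valued infinitely divisible if and only if all nonzero $a_j$ are infinitely divisible in $(A_j,\varphi_j)$, $j=1,\dots,N$.
   Context: Each $A_j$ is a von Neumann algebra and $\varphi_j$ a state with $\varphi_j(a^* )=\overline{\varphi_j(a)}$. $A=\times_{j=1}^N A_j$ with componentwise operations and adjoint; $D_N=\mathbb{C}^N$ with componentwise operations, identified with the central subalgebra $\{(\alpha_1 1,\dots,\alpha_N 1)\}$ of $A$; $E((a_1,\dots,a_N))=(\varphi_1(a_1),\dots,\varphi_N(a_N))$. $D_N$-valued cumulants: $k_n(y_1,\dots,y_n)=\sum_{\sigma\in NC(n)}\prod_{V\in\sigma}E(\prod_{l\in V}y_l)\,\mu(\sigma,1_n)$; freeness over $D_N$ means vanishing of mixed $D_N$-valued cumulants. $x\in A$ is $D_N$-valued infinitely divisible if for each $n\in\mathbb{N}$ there exist $x_{n,1},\dots,x_{n,n}\in A$ which are free from each other over $D_N$ and $D_N$-valued identically distributed, with $k_m(x,\dots,x)=\sum_{j=1}^n k_m(x_{n,j},\dots,x_{n,j})=n\,k_m(x_{n,j},\dots,x_{n,j})$ for all $m$. Infinite divisibility of $a\in(A_j,\varphi_j)$ is the analogous scalar notion (free, identically distributed $b_{n,1},\dots,b_{n,n}$ in $(A_j,\varphi_j)$ with $k^{(j)}_m(a,\dots,a)=n\,k^{(j)}_m(b_{n,l},\dots,b_{n,l})$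 for all $m$, for each $n$), where $k^{(j)}_m$ are the scalar cumulants of $\varphi_j$. *)

From HB Require Import structures.
From mathcomp Require Import all_boot all_order all_algebra.
From mathcomp Require Import complex reals.
Set Implicit Arguments. Unset Strict Implicit. Unset Printing Implicit Defensive.
Import Order.TTheory GRing.Theory Num.Theory.
Local Open Scope ring_scope.

Definition noncrossing n (P : {set {set 'I_n}}) : bool :=
  [forall V in P, forall W in P, (V != W) ==>
     ~~ [exists a : 'I_n, exists b : 'I_n, exists c : 'I_n, exists d : 'I_n,
          [&& (a < b)%N, (b < c)%N, (c < d)%N, a \in V, c \in V, b \in W & d \in W]]].

Definition isNC n (P : {set {set 'I_n}}) : bool :=
  partition P [set: 'I_n] && noncrossing P.

Definition refines n (P Q : {set {set 'I_n}}) : bool :=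
  [forall V in P, exists W in Q, V \subset W].

(* Moebius function mu(P, 1_n) of the lattice NC(n) (refinement order),
   computed by the defining recursion mu(1_n,1_n)=1,
   mu(P,1_n) = - sum_{P < Q <= 1_n} mu(Q,1_n), with fuel n
   (a non-crossing partition P is 1_n iff it has at most one block). *)
Fixpoint mu_aux n (k : nat) (P : {set {set 'I_n}}) : int :=
  if (#|P| <= 1)%N then 1 else
  match k with
  | 0 => 0
  | k'.+1 => - \sum_(Q : {set {set 'I_n}} | [&& isNC Q, refines P Q & Q != P])
                 mu_aux k' Q
  end.

Definition mobius_top n (P : {set {set 'I_n}}) : int := mu_aux n P.

(* k_n(y_1..y_n) = sum_{sigma in NC(n)} prod_{V in sigma} f(prod_{l in V} y_l) mu(sigma,1_n),
   products inside blocks taken in increasing order of indices *)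
Definition cumulant (C : numFieldType) (B : nzRingType) (f : B -> C) n
  (y : 'I_n -> B) : C :=
  \sum_(P : {set {set 'I_n}} | isNC P)
     (\prod_(V in P) f (\prod_(l in V) y l)) * (mobius_top P)%:~R.

(* Elements of A = A_1 x ... x A_N are dependent tuples  forall j, A j ;
   operations are componentwise.  D_N-values are tuples 'I_N -> C,
   and E((a_j)_j) = (phi_j(a_j))_j. *)
Section DN.
Variables (C : numFieldType) (N : nat) (A : 'I_N -> algType C)
          (phi : forall j, A j -> C).

Definition prodA := forall j, A j.

Definition condE (x : prodA) : 'I_N -> C := fun j => phi (x j).

Definition dcumulant n (y : 'I_n -> prodA) : 'I_N -> C :=
  fun j => \sum_(P : {set {set 'I_n}} | isNC P)
     (\prod_(V in P) condE (fun i => \prod_(l in V) y l i) j)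
        * (mobius_top P)%:~R.

Definition DN_free n (xs : 'I_n -> prodA) : Prop :=
  forall m (i : 'I_m -> 'I_n), (exists l1 l2, i l1 != i l2) ->
    forall j, dcumulant (fun l => xs (i l)) j = 0.

(* D_N-valued identical distribution: all D_N-valued moments
   E(x d_1 x d_2 ... x d_m), d_l in D_N (embedded as (d_l(j) 1)_j), agree *)
Definition DN_ident n (xs : 'I_n -> prodA) : Prop :=
  forall (l1 l2 : 'I_n) m (d : 'I_m -> 'I_N -> C) (j : 'I_N),
    condE (fun i => \prod_(l < m) (xs l1 i * (d l i)%:A)) j =
    condE (fun i => \prod_(l < m) (xs l2 i * (d l i)%:A)) j.

Definition DN_inf_div (x : prodA) : Prop :=
  forall n, (0 < n)%N -> exists xs : 'I_n -> prodA,
    [/\ DN_free xs, DN_ident xs &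
        forall m, (0 < m)%N -> forall j,
          dcumulant (fun _ : 'I_m => x) j
            = \sum_(l < n) dcumulant (fun _ : 'I_m => xs l) j
          /\ forall l, dcumulant (fun _ : 'I_m => x) j
                       = n%:R * dcumulant (fun _ : 'I_m => xs l) j].
End DN.

Definition scal_free (C : numFieldType) (B : nzRingType) (f : B -> C) n
  (bs : 'I_n -> B) : Prop :=
  forall m (i : 'I_m -> 'I_n), (exists l1 l2, i l1 != i l2) ->
    cumulant f (fun l => bs (i l)) = 0.

Definition scal_ident (C : numFieldType) (B : nzRingType) (f : B -> C) n
  (bs : 'I_n -> B) : Prop :=
  forall (l1 l2 : 'I_n) m, f (bs l1 ^+ m) = f (bs l2 ^+ m).

Definition inf_div (C : numFieldType) (B : nzRingType) (f : B -> C) (a : B) : Prop :=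
  forall n, (0 < n)%N -> exists bs : 'I_n -> B,
    [/\ scal_free f bs, scal_ident f bs &
        forall m, (0 < m)%N -> forall l,
          cumulant f (fun _ : 'I_m => a) = n%:R * cumulant f (fun _ : 'I_m => bs l)].

Definition is_involution (R : rcfType) (B : algType R[i]) (s : B -> B) : Prop :=
  [/\ forall a, s (s a) = a,
      forall a b, s (a + b) = s a + s b,
      forall (c : R[i]) a, s (c *: a) = (c^*)%C *: s a,
      forall a b, s (a * b) = s b * s a & s 1 = 1].

Definition is_state (R : rcfType) (B : algType R[i]) (s : B -> B) (f : B -> R[i]) : Prop :=
  [/\ forall (c : R[i]) a b, f (c *: a + b) = c * f a + f b,
      f 1 = 1,
      forall a, f (s a) = (f a)^*%C &
      forall a, 0 <= f (s a * a)].

(* The D_N-valued cumulants of (y_1, ..., y_n) are computed componentwise: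
   their j-th coordinate is the scalar cumulant of (y_1 j, ..., y_n j) with
   respect to phi_j.  Hence freeness over D_N and D_N-valued identical
   distribution split into the corresponding scalar notions in each
   coordinate (for the latter, the scalars d_l in E(x d_1 ... x d_m) factor
   out of phi_j by linearity), and so does infinite divisibility.  A zero
   coordinate is trivially infinitely divisible. *)

From HB Require Import structures.
From mathcomp Require Import all_boot all_order all_algebra.
From mathcomp Require Import complex reals.
Set Implicit Arguments. Unset Strict Implicit. Unset Printing Implicit Defensive.
Import Order.TTheory GRing.Theory Num.Theory.
Local Open Scope ring_scope.

Lemma dependent_choice (I : Type) (T : I -> Type) (P : forall i, T i -> Prop) :
  (forall i, exists x, P i x) -> exists f : forall i, T i, forall i, P i (f i).
Proof.
move=> ex; exists (fun i => sval (boolp.cid (ex i))) => i.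
exact: svalP (boolp.cid (ex i)).
Qed.

Lemma prod_mulr_alg (C : comNzRingType) (B : algType C) (x : B) m (c : 'I_m -> C) :
  \prod_(l < m) (x * (c l)%:A) = (\prod_(l < m) c l) *: x ^+ m.
Proof.
elim: m c => [|m IH] c; first by rewrite !big_ord0 scale1r expr0.
by rewrite !big_ord_recr /= IH mulr_algr -scalerAl -scalerAr scalerA -exprSr.
Qed.

Section LinearFunctional.
Variables (C : comNzRingType) (B : lmodType C) (f : B -> C).
Hypothesis f_lin : forall c u v, f (c *: u + v) = c * f u + f v.

Lemma lin_functional0 : f 0 = 0.
Proof. by have := f_lin 1 0 0; rewrite scale1r addr0 mul1r -[LHS]addr0 => /addrI/esym. Qed.

Lemma lin_functionalZ c u : f (c *: u) = c * f u.
Proof. by have := f_lin c u 0; rewrite !addr0 lin_functional0 addr0. Qed.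

End LinearFunctional.

Section ScalarCumulants.
Variables (C : numFieldType) (B : nzRingType) (f : B -> C).

Lemma cumulant_const0 m : f 0 = 0 -> (0 < m)%N -> cumulant f (fun _ : 'I_m => 0) = 0.
Proof.
move=> f0 m_gt0; apply: big1 => P /andP[/and3P[/eqP coverP _ _] _].
have /bigcupP[V VP inV] : Ordinal m_gt0 \in cover P by rewrite coverP inE.
rewrite (bigD1 V VP) /= prodr_const expr0n.
have /negbTE -> : (#|V| != 0)%N by rewrite -lt0n; apply/card_gt0P; exists (Ordinal m_gt0).
by rewrite f0 !mul0r.
Qed.

Lemma inf_div0 : f 0 = 0 -> inf_div f 0.
Proof.
move=> f0 n _; exists (fun _ => 0); split=> //.
- by move=> [|m] i [[]] // l1 _ _; apply: cumulant_const0.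
- by move=> m m_gt0 l; rewrite cumulant_const0 ?mulr0.
Qed.

End ScalarCumulants.

Lemma eq_sum_equal_shares (C : numFieldType) n (c : C) (d : 'I_n -> C) :
  (0 < n)%N -> (forall l, c = n%:R * d l) -> c = \sum_(l < n) d l.
Proof.
move=> n_gt0 share; have n_neq0 : (n%:R : C) != 0 by rewrite pnatr_eq0 -lt0n.
have dE l : d l = c / n%:R by rewrite (share l) mulrAC mulfV // mul1r.
by rewrite (eq_bigr _ (fun l _ => dE l)) sumr_const card_ord -[RHS]mulr_natr divfK.
Qed.

Section DirectProduct.
Variables (C : numFieldType) (N : nat) (A : 'I_N -> algType C)
          (phi : forall j, A j -> C).

Lemma DN_freeE n (xs : 'I_n -> prodA A) :
  DN_free phi xs <-> forall j, scal_free (@phi j) (fun l => xs l j).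
Proof.
split=> [free_xs j m i mixed | free_xs m i mixed j]; first exact: free_xs m i mixed j.
exact: free_xs j m i mixed.
Qed.

Lemma DN_ident_scal_ident n (xs : 'I_n -> prodA A) j :
  DN_ident phi xs -> scal_ident (@phi j) (fun l => xs l j).
Proof.
move=> ident_xs l1 l2 m; have := ident_xs l1 l2 m (fun _ _ => 1) j.
by rewrite /condE !prod_mulr_alg big1 // !scale1r.
Qed.

Hypothesis phiZ : forall j c (u : A j), phi (c *: u) = c * phi u.

Lemma scal_ident_DN_ident n (xs : 'I_n -> prodA A) :
  (forall j, scal_ident (@phi j) (fun l => xs l j)) -> DN_ident phi xs.
Proof. by move=> ident_xs l1 l2 m d j; rewrite /condE !prod_mulr_alg !phiZ (ident_xs j l1 l2). Qed.

Lemma DN_inf_div_inf_div (x : prodA A) j : DN_inf_div phi x -> inf_div (@phi j) (x j).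
Proof.
move=> infdiv n n_gt0; have [xs [free_xs ident_xs cum_xs]] := infdiv n n_gt0.
exists (fun l => xs l j); split.
- exact: (proj1 (DN_freeE xs) free_xs j).
- exact: DN_ident_scal_ident.
- by move=> m m_gt0; have [_] := cum_xs m m_gt0 j.
Qed.

Lemma inf_div_DN_inf_div (x : prodA A) :
  (forall j, inf_div (@phi j) (x j)) -> DN_inf_div phi x.
Proof.
move=> infdiv n n_gt0.
have [bs bsP] := dependent_choice (fun j => infdiv j n n_gt0).
exists (fun l j => bs j l); split.
- by apply/DN_freeE => j; case: (bsP j).
- by apply: scal_ident_DN_ident => j; case: (bsP j).
- move=> m m_gt0 j; have [_ _ cum_bs] := bsP j.
  split; last exact: cum_bs m m_gt0.
  exact: eq_sum_equal_shares n_gt0 (cum_bs m m_gt0).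
Qed.

End DirectProduct.

Theorem mainTheorem15 (R : realType) (N : nat) (A : 'I_N -> algType R[i])
  (star : forall j, A j -> A j) (phi : forall j, A j -> R[i])
  (Hstar : forall j, is_involution (@star j))
  (Hphi : forall j, is_state (@star j) (@phi j))
  (a : forall j, A j) :
  DN_inf_div phi a <-> (forall j, a j != 0 -> inf_div (@phi j) (a j)).
Proof.
have phi_lin j : forall c u v, phi j (c *: u + v) = c * phi j u + phi j v.
  by case: (Hphi j).
split=> [infdiv j _ | infdiv]; first exact: DN_inf_div_inf_div.
apply: inf_div_DN_inf_div => [j c u | j]; first exact: lin_functionalZ.
have [aj0 | /infdiv //] := eqVneq (a j) 0.
by rewrite aj0; apply/inf_div0/lin_functional0.
Qed.
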